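(* Let $\mathbf t=(\bar t_v)_{v\in\mathcal V}\in(\mathbb C^* )^{\mathcal V}$, write $\bar t_{ij}=\bar t_{v_{ij}}$, and define $b(\mathbf t)\in GL_{n+1}(\mathbb C)$ by $$b(\mathbf t)=x_{\mathbf c}\big((\bar t_{h_a}\bar t_{t_a}^{-1})_{a\in\mathcal A}\big)\,\mathrm{diag}(\bar t_{11},\bar t_{22},\dots,\bar t_{n+1,n+1})\,\dot w_0^{-1}\,x_{\mathbf d}\big((-\bar t_{h_a}\bar t_{t_a}^{-1})_{a\in\mathcal A}\big)^{-1}.$$ Then for $k=1,\dots,n$, in $V(\omega_k)=\bigwedge^k\mathbb C^{n+1}$ with highest weight vector $v^+_{\omega_k}=v_1\wedge\dots\wedge v_k$, $$\langle b(\mathbf t)\cdot v^+_{\omega_k},v^+_{\omega_k}\rangle=\Big(\prod_{i=1}^{n+1}\bar t_{ii}\Big)\Big(\prod_{i-j=k}\bar t_{ij}^{-1}\Big).$$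
   Context: $v_1,\dots,v_{n+1}$ is the standard basis of $\mathbb C^{n+1}$; $\langle w,v^+_{\omega_k}\rangle$ denotes the coefficient of $v_1\wedge\dots\wedge v_k$ in $w\in\bigwedge^k\mathbb C^{n+1}$ with respect to the basis of wedges of standard basis vectors. Matrices: $E_{ij}$ elementary matrices, $x_i(s)=\mathbf 1+sE_{i,i+1}$, $\dot s_i=x_i(1)(\mathbf 1-E_{i+1,i})x_i(1)\in SL_{n+1}$, $\dot w_0$ the product of the $\dot s_i$ along a reduced expression of the longest element of $S_{n+1}$. Quiver: vertices $v_{ij}$, $1\le j\le i\le n+1$ (set $\mathcal V$); arrows $c_{ij}$ from $v_{i+1,j}$ to $v_{ij}$ ($1\le j\le i\le n$) and $d_{ij}$ from $v_{ij}$ to $v_{i,j-1}$ ($2\le j\le i\le n+1$), set $\mathcal A$, with $h_a,t_a$ head and tail. For $\sigma\in(\mathbb C^* )^{\mathcal A}$ (or with entries in $\mathbb C$): $x_{\mathbf c}(\sigma)=\prod_{k=1}^{n}\big(\prod_{j=n}^{k}x_j(\sigma_{c_{j,k}})\big)$ (ordered product, $k$ increasing, $j$ decreasing from $n$ to $k$) and $x_{\mathbf d}(\sigma)=\prod_{k=n}^{1}\big(\prod_{j=1}^{k}x_{n-j+1}(\sigma_{d_{k+1,j+1}})\big)$ ($k$ decreasing, $j$ increasing). *)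

From HB Require Import structures.
From mathcomp Require Import all_boot all_order all_algebra all_fingroup.
From mathcomp Require Import complex.
From mathcomp Require Import Rstruct.
From Stdlib Require Import Reals.
Set Implicit Arguments. Unset Strict Implicit. Unset Printing Implicit Defensive.
Import GRing.Theory.
Local Open Scope ring_scope.

Definition C : numClosedFieldType := (Rdefinitions.R)[i].

(* Conventions: the paper's basis index p in {1..n+1} is the ordinal p-1 of 'I_n.+1. *)

Definition Emat (n p q : nat) : 'M[C]_n.+1 :=
  delta_mx (inord p.-1) (inord q.-1).

Definition xm (n i : nat) (s : C) : 'M[C]_n.+1 := 1 + s *: Emat n i i.+1.

Definition sdot (n i : nat) : 'M[C]_n.+1 :=
  xm n i 1 * (1 - Emat n i.+1 i) * xm n i 1.

Definition sperm (n i : nat) : 'S_n.+1 := tperm (inord i.-1) (inord i).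

Definition w0perm (n : nat) : 'S_n.+1 := perm (@rev_ord_inj n.+1).

Definition reduced_word_w0 (n : nat) (w : seq nat) : Prop :=
  [/\ all (fun i : nat => leq 1 i && leq i n) w,
      size w = 'C(n.+1, 2) &
      (\prod_(i <- w) sperm n i)%g = w0perm n].

Definition w0dot (n : nat) (w : seq nat) : 'M[C]_n.+1 := \prod_(i <- w) sdot n i.

(* The quiver: vertices v_{ij} are pairs (i,j); arrows c_{ij} : v_{i+1,j} -> v_{ij},
   d_{ij} : v_{ij} -> v_{i,j-1}. *)
Inductive arrow := c_arr of nat & nat | d_arr of nat & nat.

Definition head (a : arrow) : nat * nat :=
  match a with c_arr i j => (i, j) | d_arr i j => (i, j.-1) end.
Definition tail (a : arrow) : nat * nat :=
  match a with c_arr i j => (i.+1, j) | d_arr i j => (i, j) end.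

Definition xc (n : nat) (sigma : arrow -> C) : 'M[C]_n.+1 :=
  \prod_(1 <= k < n.+1) \prod_(j <- rev (index_iota k n.+1)) xm n j (sigma (c_arr j k)).

Definition xd (n : nat) (sigma : arrow -> C) : 'M[C]_n.+1 :=
  \prod_(k <- rev (index_iota 1 n.+1)) \prod_(1 <= j < k.+1)
     xm n (n - j + 1) (sigma (d_arr k.+1 j.+1)).

Definition bmat (n : nat) (w : seq nat) (t : nat * nat -> C) : 'M[C]_n.+1 :=
  xc n (fun a => t (head a) / t (tail a))
  * diag_mx (\row_(p < n.+1) t (p.+1, p.+1))
  * invmx (w0dot n w)
  * invmx (xd n (fun a => - (t (head a) / t (tail a)))).

(* <g . v^+_{omega_k}, v^+_{omega_k}> : coefficient of v_1 /\ ... /\ v_k in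
   g v_1 /\ ... /\ g v_k, i.e. the Leibniz expansion over the first k rows/columns. *)
Definition wedge_coef (n k : nat) (g : 'M[C]_n.+1) : C :=
  \sum_(s : 'S_k) (-1) ^+ s * \prod_(q < k) g (inord (s q)) (inord q).

(* Right multiplication by the upper unitriangular matrix x_d(...)^-1 does not change
   leading principal minors, and for a reduced word of w_0 the matrix \dot w_0 is the
   signed antidiagonal matrix (signed_rev)^T: following v_b through the word, it is moved
   n times in total and picks up a sign exactly on its n - b moves to the right.  Hence
   the k x k leading minor of b(t) is the product of the last k diagonal entries of the
   torus part times the minor of x_c on the first k rows and the last k columns.  Writing
   x_c = Y_1 ... Y_n with Y_m upper bidiagonal, right multiplication by Y_m for m <= n+1-k
   slides this k x k window one column to the right and multiplies the minor by the
   product of the superdiagonal entries t(m+j,m)/t(m+j+1,m), which telescopes to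
   t(m,m)/t(m+k,m); for m > n+1-k it leaves the window's minor unchanged. *)

From Pilot Require Import Defs.
From mathcomp Require Import all_boot all_order all_algebra all_fingroup.
From mathcomp Require Import zify ring complex Rstruct.
Import GRing.Theory.
Local Open Scope ring_scope.
Set Implicit Arguments. Unset Strict Implicit. Unset Printing Implicit Defensive.

Section WindowMinors.
Variable R : comUnitRingType.

Definition upper_unitriangular m (X : 'M[R]_m) : Prop :=
  (forall i j : 'I_m, (j < i)%N -> X i j = 0) /\ (forall i, X i i = 1).

Lemma upper_unitriangular1 m : upper_unitriangular (1%:M : 'M[R]_m).
Proof. by split=> [i j /ltn_eqF ji|i]; rewrite !mxE ?eqxx // eq_sym -(inj_eq val_inj) ji. Qed.

Lemma upper_unitriangular_mul m (X Y : 'M[R]_m) :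
  upper_unitriangular X -> upper_unitriangular Y -> upper_unitriangular (X *m Y).
Proof.
move=> [X0 X1] [Y0 Y1]; split=> [i j ji|i]; rewrite !mxE.
  apply: big1 => l _; case: (ltnP l i) => [/X0->|il]; first by rewrite mul0r.
  by rewrite Y0 ?mulr0 // (leq_trans ji il).
rewrite (bigD1 i) //= X1 Y1 mul1r big1 ?addr0 // => l /negPf li.
case: (ltngtP l i) => [/X0->|/Y0->|/val_inj il]; rewrite ?mul0r ?mulr0 //.
by rewrite il eqxx in li.
Qed.

Lemma det_upper_unitriangular m (X : 'M[R]_m) : upper_unitriangular X -> \det X = 1.
Proof.
move=> [X0 X1]; rewrite -det_tr det_trig; last by apply/is_trig_mxP => i j ij; rewrite mxE X0.
by rewrite big1 // => i _; rewrite mxE X1.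
Qed.

Definition top_window N k o (A : 'M[R]_N.+1) : 'M[R]_k :=
  \matrix_(i, j) A (inord i) (inord (o + j)).

Lemma top_window_mul_unitriangular N k (A X : 'M[R]_N.+1) : (k <= N.+1)%N ->
  upper_unitriangular X -> top_window k 0 (A *m X) = top_window k 0 A *m top_window k 0 X.
Proof.
move=> kN [X0 _]; apply/matrixP => i j; rewrite !mxE.
rewrite (eq_bigr (fun l : 'I_k => A (inord i) (inord l) * X (inord l) (inord j)));
  last by move=> l _; rewrite !mxE.
rewrite (big_ord_widen _ (fun l => A (inord i) (inord l) * X (inord l) (inord j)) kN).
rewrite [LHS](bigID (fun l : 'I_N.+1 => (l < k)%N)) /= [X in _ + X]big1 ?addr0.
  by apply: eq_bigr => l _; rewrite inord_val.
move=> l; rewrite -leqNgt => kl; rewrite X0 ?mulr0 // inordK; last exact: leq_trans (ltn_ord j) kN.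
exact: leq_trans (ltn_ord j) kl.
Qed.

Lemma det_top_window_mul_invmx N k (A X : 'M[R]_N.+1) : (k <= N.+1)%N ->
  upper_unitriangular X -> \det (top_window k 0 (A *m invmx X)) = \det (top_window k 0 A).
Proof.
move=> kN uX; have Xu : X \in unitmx by rewrite unitmxE det_upper_unitriangular ?unitr1.
rewrite -[in RHS](mulmxKV Xu A) [in RHS]top_window_mul_unitriangular // det_mulmx.
rewrite (@det_upper_unitriangular _ (top_window k 0 X)) ?mulr1 //.
case: uX => X0 X1; split=> [i j ji|i]; rewrite mxE ?X1 // X0 //.
by rewrite !inordK // (leq_trans (ltn_ord _) kN).
Qed.

Definition signed_rev m : 'M[R]_m := \matrix_(i, j) ((i == rev_ord j)%:R * (-1) ^+ j).

Lemma det_signed_rev m : \det (signed_rev m) = 1.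
Proof.
elim: m => [|m IHm]; first by rewrite det_mx00.
have minorE : row' ord_max (col' ord0 (signed_rev m.+1)) = - signed_rev m.
  apply/matrixP => i j; rewrite !mxE exprS mulNr mul1r mulrN; congr (- (_%:R * _)).
  by rewrite -!(inj_eq val_inj) /= /bump /= leqNgt ltn_ord add0n; lia.
rewrite (expand_det_row _ ord_max) (bigD1 ord0) //= big1 ?addr0 => [|j j0].
  rewrite /cofactor minorE -scaleN1r detZ IHm !mxE /= addn0 mulr1.
  have -> : ord_max == rev_ord (ord0 : 'I_m.+1) by apply/eqP/val_inj => /=; lia.
  by rewrite mul1r mulr1 -expr2 sqrr_sign.
rewrite [signed_rev _ _ _]mxE; have -> : (ord_max == rev_ord j) = false; last by rewrite !mul0r.
by apply/negbTE; move: j0; rewrite -!(inj_eq val_inj) /=; have := ltn_ord j; lia.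
Qed.

Lemma trmx_signed_rev_mul m : (signed_rev m)^T *m signed_rev m = 1%:M.
Proof.
apply/matrixP => a b; rewrite !mxE (bigD1 (rev_ord a)) //= big1 => [|l /negPf la].
  rewrite !mxE eqxx mul1r addr0 (inj_eq rev_ord_inj) eq_sym.
  by case: eqP => [->|_]; rewrite ?mul0r ?mulr0 // mulrCA -expr2 sqrr_sign mulr1.
by rewrite /signed_rev !mxE la !mul0r.
Qed.

Lemma invmx_tr_signed_rev m : invmx (signed_rev m)^T = signed_rev m.
Proof.
have [uT _] := mulmx1_unit (trmx_signed_rev_mul m).
by rewrite -[RHS](mulKmx uT) trmx_signed_rev_mul mulmx1.
Qed.

Lemma top_window_mul_diag_signed_rev N k (A : 'M[R]_N.+1) (d : 'rV[R]_N.+1) :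
  (k <= N.+1)%N ->
  top_window k 0 (A *m diag_mx d *m signed_rev N.+1)
  = top_window k (N.+1 - k) A *m signed_rev k *m diag_mx (\row_(p < k) d 0 (inord (N - p))).
Proof.
move=> kN; apply/matrixP => i p; rewrite mul_mx_diag mul_mx_diag !mxE.
have pN : (p < N.+1)%N := leq_trans (ltn_ord p) kN.
rewrite (bigD1 (rev_ord (inord p))) // [X in _ = X * _](bigD1 (rev_ord p)) //=.
rewrite /signed_rev !big1 ?addr0 => [|r /negPf rp|r /negPf rp]; rewrite ?mxE ?rp ?mul0r ?mulr0 //.
rewrite !eqxx !mul1r inordK // [RHS]mulrAC.
by congr (A _ _ * d 0 _ * _); apply/val_inj; rewrite /= !inordK //; have := ltn_ord p; lia.
Qed.

Definition bidiag {m} (y : nat -> R) : 'M[R]_m :=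
  \matrix_(l, c) ((l == c)%:R + (c == l.+1 :> nat)%:R * y c).

Lemma sum_mul_indicator m (F : 'I_m -> R) (P : pred 'I_m) :
  \sum_r F r * (P r)%:R = \sum_(r | P r) F r.
Proof. by rewrite [RHS]big_mkcond; apply: eq_bigr => r _; case: (P r); rewrite ?mulr1 ?mulr0. Qed.

Lemma mulmx_bidiag m (A : 'M[R]_m) y i c :
  (A *m bidiag y) i c = A i c + \sum_(l : 'I_m | c == l.+1 :> nat) A i l * y c.
Proof.
rewrite mxE (eq_bigr (fun l : 'I_m => A i l * (l == c)%:R + A i l * y c * (c == l.+1 :> nat)%:R));
  last by move=> l _; rewrite mxE mulrDr mulrA mulrAC.
by rewrite big_split /= !sum_mul_indicator big_pred1_eq.
Qed.

Lemma mulmx_bidiag_band m (A : 'M[R]_m) y s :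
  (forall i c : 'I_m, (i + s < c)%N -> A i c = 0) ->
  forall i c : 'I_m, (i + s.+1 < c)%N -> (A *m bidiag y) i c = 0.
Proof.
move=> A0 i c ic; rewrite mulmx_bidiag A0 ?add0r; last lia.
by apply: big1 => l /eqP cl; rewrite A0 ?mul0r //; lia.
Qed.

Lemma det_top_window_mul_bidiag_shift N k o (A : 'M[R]_N.+1) y :
  (o + k < N.+1)%N -> (forall i : 'I_k, A (inord i) (inord (o + k)) = 0) ->
  \det (top_window k o.+1 (A *m bidiag y))
  = \det (top_window k o A) * \prod_(j < k) y (o.+1 + j)%N.
Proof.
(* Column o+1+j of [A *m bidiag y] is y (o+1+j) times column o+j plus column o+1+j;
   for j = k-1 the latter has left the window, where the first k rows of [A] vanish. *)
move=> okN A0.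
pose L : 'M[R]_k := \matrix_(r, j) ((r == j)%:R * y (o.+1 + j)%N + (r == j.+1 :> nat)%:R).
have -> : top_window k o.+1 (A *m bidiag y) = top_window k o A *m L.
  apply/matrixP => i j; rewrite {1}/top_window mxE mulmx_bidiag [RHS]mxE.
  rewrite (eq_bigr (fun r : 'I_k => A (inord i) (inord (o + r)) * y (o.+1 + j)%N * (r == j)%:R
                             + A (inord i) (inord (o + r)) * (r == j.+1 :> nat)%:R));
    last by move=> r _; rewrite !mxE mulrDr mulrA mulrAC.
  have ojN : (o.+1 + j < N.+1)%N by have := ltn_ord j; lia.
  rewrite big_split /= !sum_mul_indicator big_pred1_eq (big_pred1 (inord (o + j))) => [|l].
    rewrite inordK // addrC; congr (_ + _); case: (ltnP j.+1 k) => jk.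
      by rewrite (big_pred1 (Ordinal jk)) => [|r]; rewrite ?addnS // -val_eqE.
    rewrite big_pred0 => [|r]; last by apply/eqP; have := ltn_ord r; lia.
    by rewrite (_ : (o.+1 + j = o + k)%N) ?A0 //; have := ltn_ord j; lia.
  by rewrite /= -val_eqE /= !inordK //; try apply/eqP/eqP; lia.
rewrite det_mulmx [\det L]det_trig; last first.
  apply/is_trig_mxP => r j rj; rewrite mxE -val_eqE !ltn_eqF ?mul0r ?addr0 //.
  exact: ltnW.
by congr (_ * _); apply: eq_bigr => j _; rewrite mxE eqxx mul1r ltn_eqF ?addr0.
Qed.

Lemma upper_unitriangular_bidiag m y : upper_unitriangular (@bidiag m y).
Proof.
split=> [i j ji|i]; rewrite mxE; last by rewrite eqxx ltn_eqF ?mul0r ?addr0.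
by rewrite eq_sym -val_eqE !ltn_eqF ?mul0r ?addr0 // ltnW.
Qed.

Lemma det_top_window_mul_bidiag_stable N k o (A : 'M[R]_N.+1) y :
  (o + k <= N.+1)%N -> y o = 0 ->
  \det (top_window k o (A *m bidiag y)) = \det (top_window k o A).
Proof.
move=> okN yo0.
have -> : top_window k o (A *m bidiag y) = top_window k o A *m bidiag (fun c => y (o + c)%N).
  apply/matrixP => i j; rewrite {1}/top_window mxE !mulmx_bidiag [top_window _ _ _ i j]mxE.
  congr (_ + _); have ojN : (o + j < N.+1)%N by have := ltn_ord j; lia.
  case: j ojN => -[|j] jk /= ojN.
    by rewrite [RHS]big_pred0 // big1 // => l _; rewrite inordK // addn0 yo0 mulr0.
  rewrite (big_pred1 (inord (o + j))) => [|l]; last first.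
    by rewrite /= -val_eqE /= !inordK //; try apply/eqP/eqP; lia.
  rewrite (big_pred1 (Ordinal (ltnW jk))) => [|l]; last by rewrite /= -val_eqE /= eqSS eq_sym.
  by rewrite !mxE inordK.
by rewrite det_mulmx (det_upper_unitriangular (upper_unitriangular_bidiag _ _)) mulr1.
Qed.

End WindowMinors.

Arguments signed_rev {R} m.
Arguments bidiag {R m} y.

Section LongestWord.
Variable n : nat.
Implicit Types (i : nat) (w : seq nat).

Lemma Emat_mul i j k l : (j.-1 <= n)%N -> (k.-1 <= n)%N ->
  Emat n i j * Emat n k l = if j.-1 == k.-1 then Emat n i l else 0.
Proof.
move=> jn kn; rewrite /Emat; case: ifP => [/eqP->|jk]; first exact: mul_delta_mx.
by apply: mul_delta_mx_0; rewrite -val_eqE /= !inordK ?jk.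
Qed.

Lemma inord_pred_neq i : (1 <= i <= n)%N -> (inord i.-1 : 'I_n.+1) != inord i.
Proof. by move=> /andP[i1 iN]; rewrite -val_eqE /= !inordK; lia. Qed.

Lemma sdotE i : (1 <= i <= n)%N ->
  sdot n i = 1 + Emat n i i.+1 - Emat n i.+1 i - Emat n i i - Emat n i.+1 i.+1.
Proof.
move=> /andP[i1 iN]; rewrite /sdot /xm !scale1r.
have EE : Emat n i i.+1 * Emat n i i.+1 = 0.
  by rewrite Emat_mul /=; [case: eqP => //; lia | lia | lia].
have EF : Emat n i i.+1 * Emat n i.+1 i = Emat n i i by rewrite Emat_mul ?eqxx.
have FE : Emat n i.+1 i * Emat n i i.+1 = Emat n i.+1 i.+1 by rewrite Emat_mul ?eqxx //; lia.
have GE : Emat n i i * Emat n i i.+1 = Emat n i i.+1 by rewrite Emat_mul ?eqxx //; lia.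
rewrite !(mulrDl, mulrDr, mulrBl, mulrBr, mul1r, mulr1, mulrN, mulNr) EF FE EE GE.
by apply/matrixP => a b; rewrite !mxE; ring.
Qed.

Lemma sdot_signed_perm i : (1 <= i <= n)%N ->
  sdot n i = \matrix_(a, x) ((a == sperm n i x)%:R * (-1) ^+ (x == inord i.-1)).
Proof.
move=> iN; have /negPf pq := inord_pred_neq iN.
rewrite sdotE //; apply/matrixP => a x; rewrite /Emat /sperm !mxE.
set p : 'I_n.+1 := inord i.-1 in pq *; set q : 'I_n.+1 := inord i in pq *.
case: (eqVneq x p) => [->|xp]; first by rewrite tpermL pq !andbT !andbF /=; ring.
case: (eqVneq x q) => [->|xq]; first by rewrite tpermR !andbT !andbF /=; ring.
by rewrite tpermD 1?eq_sym // !andbF /=; ring.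
Qed.

Lemma sperm_val i (z : 'I_n.+1) : (1 <= i <= n)%N ->
  sperm n i z = (if z == i.-1 :> nat then i else if z == i :> nat then i.-1 else z) :> nat.
Proof.
move=> iN; rewrite /sperm; case: tpermP => [->|->|]; rewrite ?inordK ?eqxx //; try lia.
  by case: ifP => //; lia.
move=> zp zq; case: eqP => [e|_]; first by case: zp; apply/val_inj; rewrite /= inordK; lia.
by case: eqP => [e|_] //; case: zq; apply/val_inj; rewrite /= inordK; lia.
Qed.

Definition track w : 'S_n.+1 := ((\prod_(i <- w) sperm n i)^-1)%g.

(* Reading [w] from right to left, [\dot s_i] sends the basis vector at (0-based)
   position i-1 to minus the one at position i, and the one at position i to position
   i-1.  [track w b] is where v_b ends up, and [up_moves]/[down_moves] count its moves
   to the right (each contributing a sign) and to the left. *)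
Fixpoint up_moves w (b : 'I_n.+1) : nat :=
  if w is i :: w' then (up_moves w' b + (track w' b == inord i.-1))%N else 0%N.

Fixpoint down_moves w (b : 'I_n.+1) : nat :=
  if w is i :: w' then (down_moves w' b + (track w' b == inord i))%N else 0%N.

Lemma track_nil b : track [::] b = b.
Proof. by rewrite /track big_nil invg1 perm1. Qed.

Lemma track_cons i w : track (i :: w) = (track w * sperm n i)%g.
Proof. by rewrite /track big_cons invMg /sperm tpermV. Qed.

Lemma w0dot_signed_perm w : all (fun i => 1 <= i <= n)%N w ->
  w0dot n w = \matrix_(a, b) ((a == track w b)%:R * (-1) ^+ up_moves w b).
Proof.
elim: w => [_|i w IHw /andP[iN wN]].
  by apply/matrixP => a b; rewrite /w0dot big_nil !mxE track_nil mulr1 eq_sym.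
rewrite /w0dot big_cons -/(w0dot n w) IHw // sdot_signed_perm //.
apply/matrixP => a b; rewrite !mxE (bigD1 (track w b)) //= big1 => [|l /negPf lb]; last first.
  by rewrite !mxE lb mul0r mulr0.
by rewrite !mxE eqxx mul1r addr0 track_cons permM exprD -mulrA [_ * _ ^+ up_moves w b]mulrC.
Qed.

Lemma track_add_down_moves w b : all (fun i => 1 <= i <= n)%N w ->
  (track w b + down_moves w b = b + up_moves w b)%N.
Proof.
elim: w => [|i w IHw /andP[iN /IHw]] /=; first by rewrite track_nil.
rewrite track_cons permM sperm_val // -!val_eqE /= !inordK; try lia.
by case: eqP; case: eqP => /=; lia.
Qed.

Lemma sum_perm_pred1 (s : 'S_n.+1) (c : 'I_n.+1) : (\sum_b (s b == c) = 1)%N.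
Proof.
rewrite (bigD1 ((s^-1)%g c)) //= permKV eqxx big1 // => b sbc.
by apply/eqP; rewrite eqb0; apply: contra sbc => /eqP <-; rewrite permK.
Qed.

Lemma sum_moves w : (\sum_(b : 'I_n.+1) (up_moves w b + down_moves w b) = 2 * size w)%N.
Proof.
elim: w => [|i w IHw] /=; first by rewrite big1.
rewrite (eq_bigr (fun b => up_moves w b + down_moves w b
                           + ((track w b == inord i.-1) + (track w b == inord i))))%N;
  last by move=> b _; lia.
by rewrite big_split /= IHw big_split /= !sum_perm_pred1; lia.
Qed.

Definition inversions (s : 'S_n.+1) (b : 'I_n.+1) : nat :=
  #|[set c : 'I_n.+1 | (b < c)%N != (s b < s c)%N]|.

Lemma sperm_ltE i (x y : 'I_n.+1) : (1 <= i <= n)%N ->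
  ~~ ((x == inord i.-1) && (y == inord i)) -> ~~ ((x == inord i) && (y == inord i.-1)) ->
  (sperm n i x < sperm n i y)%N = (x < y)%N.
Proof.
move=> iN; rewrite !sperm_val // -!val_eqE /= !inordK; try lia.
by do ![case: eqP => ? /=]; lia.
Qed.

Lemma card_perm_preim1_le (s : 'S_n.+1) (e : bool) (q : 'I_n.+1) :
  (#|[set c | e && (s c == q)]| <= e)%N.
Proof.
case: e => /=; last by rewrite (eq_finset (fun _ => false)) ?cards0.
rewrite (_ : [set c | s c == q] = [set (s^-1)%g q]) ?cards1 //.
by apply/setP => c; rewrite !inE; apply/eqP/eqP => [<-|->]; rewrite ?permK ?permKV.
Qed.

Lemma inversions_mul_sperm (s : 'S_n.+1) i b : (1 <= i <= n)%N ->
  (inversions (s * sperm n i)%g b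
   <= inversions s b + (s b == inord i.-1) + (s b == inord i))%N.
Proof.
move=> iN; pose swapped p q := [set c : 'I_n.+1 | (s b == p) && (s c == q)].
have sub : [set c : 'I_n.+1 | (b < c)%N != ((s * sperm n i)%g b < (s * sperm n i)%g c)%N]
    \subset [set c : 'I_n.+1 | (b < c)%N != (s b < s c)%N]
            :|: swapped (inord i.-1) (inord i) :|: swapped (inord i) (inord i.-1).
  apply/subsetP => c; rewrite !inE !permM.
  case: (boolP (_ && _)) => [|pq]; first by rewrite orbT.
  case: (boolP (_ && _)) => [|qp]; first by rewrite orbT.
  by rewrite sperm_ltE // !orbF.
apply: leq_trans (subset_leq_card sub) _.
apply: leq_trans (leq_card_setU _ _) _; rewrite leq_add //; last exact: card_perm_preim1_le.
apply: leq_trans (leq_card_setU _ _) _; rewrite leq_add //; exact: card_perm_preim1_le.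
Qed.

Lemma inversions_track_le w b : all (fun i => 1 <= i <= n)%N w ->
  (inversions (track w) b <= up_moves w b + down_moves w b)%N.
Proof.
elim: w => [_|i w IHw /andP[iN /IHw le_w]] /=.
  by rewrite /inversions (eq_finset (fun _ => false)) ?cards0 // => c; rewrite !track_nil eqxx.
by rewrite track_cons; apply: leq_trans (inversions_mul_sperm _ _ iN) _; lia.
Qed.

Lemma track_w0 w b : reduced_word_w0 n w -> track w b = rev_ord b.
Proof.
case=> _ _ w0E; rewrite /track w0E; apply: (@perm_inj _ (w0perm n)).
by rewrite permKV /w0perm permE rev_ordK.
Qed.

Lemma inversions_rev (s : 'S_n.+1) b : s =1 @rev_ord n.+1 -> inversions s b = n.
Proof.
move=> sE; transitivity #|[set~ b]|; last by rewrite cardsC1 card_ord.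
by apply: eq_card => c; rewrite !inE !sE -val_eqE /=; have := ltn_ord b; have := ltn_ord c; lia.
Qed.

Lemma bin2_mul2 m : ('C(m, 2) * 2 = m * m.-1)%N.
Proof. by elim: m => [|m IHm] //; rewrite binS bin1 mulnDl IHm; case: m {IHm} => //= m; lia. Qed.

Lemma up_moves_w0 w b : reduced_word_w0 n w -> up_moves w b = (n - b)%N.
Proof.
(* A letter can create an inversion at b only by moving b.  The C(n+1, 2) letters make
   (n+1) n moves in total, which is also the total number of inversions of w_0 counted at
   every b (n at each), so every b moves exactly n times. *)
move=> w0w; have [wN size_w _] := w0w.
have le_moves c : (n <= up_moves w c + down_moves w c)%N.
  by rewrite -(inversions_rev c (fun c => track_w0 c w0w)); exact: inversions_track_le.
have : (\sum_c (up_moves w c + down_moves w c - n) == 0)%N.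
  rewrite sumnB // sum_moves size_w sum_nat_const card_ord.
  by have := bin2_mul2 n.+1; rewrite /=; nia.
rewrite sum_nat_eq0 => /forallP/(_ b)/eqP.
have := track_add_down_moves b wN; have := le_moves b.
by rewrite track_w0 //=; have := ltn_ord b; lia.
Qed.

Lemma w0dot_w0 w : reduced_word_w0 n w -> w0dot n w = (signed_rev n.+1)^T.
Proof.
move=> w0w; have [wN _ _] := w0w; rewrite w0dot_signed_perm //.
apply/matrixP => a b; rewrite !mxE track_w0 // up_moves_w0 //.
case: (eqVneq a (rev_ord b)) => [->|ab];
  last by rewrite eq_sym (canF_eq rev_ordK) (negPf ab) !mul0r.
by rewrite (rev_ordK b) eqxx /= subSS.
Qed.

End LongestWord.

Section Unipotent.
Variable n : nat.

Lemma upper_unitriangular_xm j s : (1 <= j <= n)%N -> upper_unitriangular (xm n j s).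
Proof.
move=> jN; split=> [a b ba|a]; rewrite /xm /Emat !mxE -!val_eqE /= !inordK; try lia.
  rewrite gtn_eqF // (_ : _ && _ = false) ?mulr0 ?addr0 //.
  by apply/andP => -[/eqP ? /eqP ?]; lia.
rewrite eqxx (_ : _ && _ = false) ?mulr0 ?addr0 //.
by apply/andP => -[/eqP ? /eqP ?]; lia.
Qed.

Lemma upper_unitriangular_xd sigma : upper_unitriangular (xd n sigma).
Proof.
rewrite /xd big_seq; apply: (big_ind (@upper_unitriangular _ _)).
- exact: upper_unitriangular1.
- exact: upper_unitriangular_mul.
move=> k; rewrite mem_rev mem_index_iota => kN; rewrite big_nat_cond.
apply: (big_ind (@upper_unitriangular _ _)).
- exact: upper_unitriangular1.
- exact: upper_unitriangular_mul.
by move=> j /andP[jk _]; apply: upper_unitriangular_xm; lia.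
Qed.

Lemma prod_xm_desc (s : seq nat) (f : nat -> C) :
  sorted gtn s -> all (fun j => 1 <= j <= n)%N s ->
  \prod_(j <- s) xm n j (f j) = 1 + \sum_(j <- s) f j *: Emat n j j.+1.
Proof.
elim: s => [|j s IHs] /=; first by rewrite !big_nil addr0.
move=> /[dup] /path_sorted s_sorted.
rewrite path_sortedE; last by move=> a b c /= ba cb; exact: ltn_trans cb ba.
move=> /andP[s_lt _] /andP[jN sN].
have EE : f j *: Emat n j j.+1 * \sum_(l <- s) f l *: Emat n l l.+1 = 0.
  rewrite big_distrr big1_seq //= => l ls; have := allP sN l ls; have := allP s_lt l ls.
  move=> lj lN; rewrite -scalerAl -scalerAr Emat_mul /=; try lia.
  by case: eqP => [?|_]; [lia | rewrite !scaler0].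
rewrite !big_cons IHs // /xm mulrDl mul1r mulrDr mulr1 EE addr0.
by rewrite -addrA [f j *: _ + _]addrC.
Qed.

End Unipotent.

Section XcMinor.
Variables (n : nat) (t : nat * nat -> C).

Definition xc_superdiag (m c : nat) : C :=
  if (m <= c)%N then t (c, m) / t (c.+1, m) else 0.

Definition xc_factor m : 'M[C]_n.+1 :=
  \prod_(j <- rev (index_iota m n.+1)) xm n j (t (j, m) / t (j.+1, m)).

Lemma xc_factor_bidiag m : (1 <= m)%N -> xc_factor m = bidiag (xc_superdiag m).
Proof.
move=> m1; rewrite /xc_factor prod_xm_desc; first last.
- by apply/allP => j; rewrite mem_rev mem_index_iota; lia.
- by rewrite rev_sorted; exact: iota_ltn_sorted.
apply/matrixP => l c; rewrite !mxE summxE big_rev; congr (_ + _).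
rewrite (eq_bigr (fun j => t (j, m) / t (j.+1, m) * ((l == inord j.-1) && (c == inord j))%:R));
  last by move=> j _; rewrite !mxE.
rewrite /xc_superdiag; case: (boolP ((c == l.+1 :> nat) && (m <= c)%N)) => [/andP[/eqP cl mc]|].
  rewrite (bigD1_seq (c : nat)) ?iota_uniq ?mem_index_iota //=; last by have := ltn_ord c; lia.
  rewrite big1_seq ?addr0 => [|j /andP[jc]]; last first.
    rewrite mem_index_iota => /andP[_ jN].
    by rewrite [c == _]eq_sym -[inord j == c]val_eqE /= inordK // (negPf jc) andbF /= mulr0n mulr0.
  rewrite mc inord_val eqxx andbT -val_eqE /= inordK; last by have := ltn_ord c; lia.
  by rewrite cl /= !eqxx /= mulr1 mul1r.
rewrite negb_and => /orP clm; rewrite big1_seq.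
  by case: clm => [/negPf->|/negPf->]; rewrite /= ?mulr0n ?mul0r ?mulr0.
move=> j; rewrite mem_index_iota => /andP[mj jN]; rewrite -!val_eqE /= !inordK; try lia.
case: (boolP (_ && _)) => [/andP[/eqP lj /eqP cj]|_]; last by rewrite /= mulr0n mulr0.
by case: clm => /negP[]; [apply/eqP|]; lia.
Qed.

Definition xc_partial m : 'M[C]_n.+1 := \prod_(1 <= m' < m.+1) xc_factor m'.

Lemma xc_partialS m : xc_partial m.+1 = xc_partial m *m xc_factor m.+1.
Proof. by rewrite /xc_partial big_nat_recr. Qed.

Lemma xc_partial_band m (i c : 'I_n.+1) : (i + m < c)%N -> xc_partial m i c = 0.
Proof.
elim: m i c => [|m IHm] i c ic.
  by rewrite addn0 in ic; rewrite /xc_partial big_geq // -idmxE mxE -val_eqE ltn_eqF.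
by rewrite xc_partialS xc_factor_bidiag //; exact: (mulmx_bidiag_band _ IHm).
Qed.

Lemma det_top_window_xc_partial k m : (m + k <= n.+1)%N ->
  \det (top_window k m (xc_partial m))
  = \prod_(1 <= m' < m.+1) \prod_(j < k) xc_superdiag m' (m' + j).
Proof.
elim: m => [k_le|m IHm mk].
  rewrite big_geq // (_ : top_window _ _ _ = 1%:M) ?det1 //.
  apply/matrixP => i j; rewrite /xc_partial big_geq // !mxE -val_eqE /= !inordK //.
  - exact: leq_trans (ltn_ord j) k_le.
  - exact: leq_trans (ltn_ord i) k_le.
rewrite xc_partialS xc_factor_bidiag // det_top_window_mul_bidiag_shift.
- by rewrite IHm ?[RHS]big_nat_recr //; lia.
- lia.
by move=> i; apply: xc_partial_band; rewrite !inordK; have := ltn_ord i; lia.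
Qed.

Lemma det_top_window_xc_partial_stable k o m : (o + k <= n.+1)%N -> (o <= m)%N ->
  \det (top_window k o (xc_partial m)) = \det (top_window k o (xc_partial o)).
Proof.
move=> ok; elim: m => [|m IHm om]; first by rewrite leqn0 => /eqP->.
case: (eqVneq o m.+1) => [-> //|om1].
rewrite xc_partialS xc_factor_bidiag // det_top_window_mul_bidiag_stable // ?IHm //; try lia.
by rewrite /xc_superdiag ltnNge (_ : o <= m)%N //; lia.
Qed.

Hypothesis t_neq0 : forall i j : nat, (1 <= j <= i)%N -> (i <= n.+1)%N -> t (i, j) != 0.

Lemma prod_xc_superdiag m k : (1 <= m)%N -> (0 < k)%N -> (m + k <= n.+1)%N ->
  \prod_(j < k) xc_superdiag m (m + j) = t (m, m) / t (m + k, m).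
Proof.
move=> m1 k0 mk; rewrite -(big_mkord xpredT (fun j => xc_superdiag m (m + j))).
rewrite (telescope_prodr_eq (fun j => t ((m + j)%N, m))) ?addn0 // => j jk.
  by rewrite unitfE t_neq0 //; lia.
by rewrite /xc_superdiag leq_addr addnS.
Qed.

Lemma det_top_window_xc k : (1 <= k <= n)%N ->
  \det (top_window k (n.+1 - k) (xc n (fun a => t (Defs.head a) / t (Defs.tail a))))
  = \prod_(1 <= m < n.+2 - k) (t (m, m) / t (m + k, m)).
Proof.
move=> kN; rewrite -/(xc_partial n) det_top_window_xc_partial_stable; try lia.
rewrite det_top_window_xc_partial; last lia.
rewrite (_ : n.+2 - k = (n.+1 - k).+1)%N; last lia.
by apply: eq_big_nat => m mk; apply: prod_xc_superdiag; lia.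
Qed.

End XcMinor.

Lemma wedge_coef_det n k (g : 'M[C]_n.+1) : wedge_coef k g = \det (top_window k 0 g).
Proof.
rewrite -det_tr /wedge_coef /determinant; apply: eq_bigr => s _.
by congr (_ * _); apply: eq_bigr => q _; rewrite !mxE.
Qed.

Unset Implicit Arguments.

Theorem lemma9p3 (n : nat) (w : seq nat) (t : nat * nat -> C) :
  reduced_word_w0 n w ->
  (forall i j : nat, (1 <= j <= i)%N -> (i <= n.+1)%N -> t (i, j) != 0) ->
  forall k : nat, (1 <= k <= n)%N ->
    wedge_coef k (bmat n w t)
    = (\prod_(1 <= i < n.+2) t (i, i)) * \prod_(1 <= j < n.+2 - k) (t (j + k, j))^-1.
Proof.
move=> w0w t_neq0 k kN; have kN1 : (k <= n.+1)%N by lia.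
rewrite wedge_coef_det /bmat -!mulmxE det_top_window_mul_invmx //;
  last exact: upper_unitriangular_xd.
rewrite w0dot_w0 // invmx_tr_signed_rev top_window_mul_diag_signed_rev //.
rewrite !det_mulmx det_signed_rev mulr1 det_diag det_top_window_xc // big_split /=.
rewrite [in RHS](big_cat_nat _ (n := n.+2 - k)) /=; try lia.
rewrite [\prod_(n.+2 - k <= i < n.+2) _]big_rev_mkord (_ : n.+2 - (n.+2 - k) = k)%N; last lia.
rewrite mulrAC; congr (_ * _ * _); apply: eq_bigr => p _.
have pn : (p <= n)%N by have := ltn_ord p; lia.
by rewrite !mxE inordK ?subSS ?subSn // ltnS leq_subr.
Qed.
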